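(* Let $\Gamma=(V,E)$ be a graph and $x,y\in V$. If perfect state transfer occurs from $d^*e_x$ to $d^*e_y$ on $\Gamma$, then $\mathrm{Aut}(\Gamma)_x=\mathrm{Aut}(\Gamma)_y$.
   Context: All graphs are finite and simple. $\mathcal{A}$ is the set of symmetric arcs of $\Gamma$, $t((x,y))=y$, $(x,y)^{-1}=(y,x)$. The boundary matrix is $d_{x,a}=\frac{1}{\sqrt{\deg x}}\delta_{x,t(a)}$; $R_{a,b}=\delta_{a,b^{-1}}$; $U=R(2d^*d-I_{\mathcal{A}})$; $e_x$ is the standard unit vector of $\mathbb{C}^V$. Perfect state transfer from $\Phi$ to a distinct state $\Psi$ means $U^\tau\Phi=\gamma\Psi$ for some $\tau\in\mathbb{Z}_{\ge1}$ and $\gamma\in\mathbb{C}$ with $|\gamma|=1$. $\mathrm{Aut}(\Gamma)$ is the automorphism group of $\Gamma$ and $\mathrm{Aut}(\Gamma)_x=\{g\in\mathrm{Aut}(\Gamma)\mid g(x)=x\}$. *)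

From mathcomp Require Import all_boot all_order all_algebra all_fingroup all_field.
Set Implicit Arguments. Unset Strict Implicit. Unset Printing Implicit Defensive.
Import Order.TTheory GRing.Theory Num.Theory.
Local Open Scope ring_scope.

Section Walk.
Variables (V : finType) (e : rel V).

Definition arc := {p : V * V | e p.1 p.2}.

Definition arc_t (a : arc) : V := (val a).2.

Definition deg (x : V) : nat := #|[set y | e x y]|.

Definition bdry (x : V) (a : arc) : algC :=
  (sqrtC (deg x)%:R)^-1 * (x == arc_t a)%:R.

Definition bdry_adj (a : arc) (x : V) : algC := (bdry x a)^*.

Definition dsd (a b : arc) : algC := \sum_(x : V) bdry_adj a x * bdry x b.

Definition Rmat (a b : arc) : algC :=
  (val a == ((val b).2, (val b).1))%:R.

Definition Umat (a b : arc) : algC :=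
  \sum_(c : arc) Rmat a c * (2 * dsd c b - (c == b)%:R).

Definition applyU (psi : arc -> algC) : arc -> algC :=
  fun a => \sum_(b : arc) Umat a b * psi b.

Definition dstar_e (x : V) : arc -> algC :=
  fun a => \sum_(z : V) bdry_adj a z * (z == x)%:R.

Definition PST (Phi Psi : arc -> algC) : Prop :=
  (exists a, Phi a != Psi a) /\
  exists (tau : nat) (gamma : algC), (0 < tau)%N /\ `|gamma| = 1 /\
    forall a, iter tau applyU Phi a = gamma * Psi a.

Definition is_aut (g : {perm V}) : bool :=
  [forall u, forall v, e (g u) (g v) == e u v].

Definition Aut_stab (x : V) : {set {perm V}} :=
  [set g : {perm V} | is_aut g && (g x == x)].

End Walk.

From Pilot Require Import Defs.
From mathcomp Require Import all_boot all_order all_algebra all_fingroup all_field.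
From mathcomp Require Import ring.
From Stdlib Require Import FunctionalExtensionality.
Set Implicit Arguments. Unset Strict Implicit. Unset Printing Implicit Defensive.
Import Order.TTheory GRing.Theory Num.Theory.
Local Open Scope ring_scope.

(* The walk operator U = R (2 d^* d - I) is a product of two involutions (the
   coin 2 d^* d - I squares to I because d d^* = I), hence invertible, and it
   commutes with the permutation of arcs induced by any automorphism g.  The
   state d^* e_u is supported exactly on the arcs ending at u, so when it is
   nonzero, g fixes u iff g fixes d^* e_u.  Since U^tau d^* e_x = gamma d^* e_y,
   g fixes d^* e_x iff g fixes d^* e_y. *)

Lemma inj_iter (T : Type) (f : T -> T) n : injective f -> injective (iter n f).
Proof. by move=> f_inj; elim: n => //= n IHn x y /f_inj /IHn. Qed.

Section ProportionalImage.
Variables (T : Type) (R : idomainType) (F : (T -> R) -> T -> R).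
Variables (phi psi : T -> R) (c : R).
Hypotheses (F_inj : injective F) (c_neq0 : c != 0).
Hypothesis F_phi : F phi = (fun t => c * psi t).

Lemma proportional_image_eq0 :
  F (fun _ => 0) = (fun _ => 0) -> phi = (fun _ => 0) <-> psi = (fun _ => 0).
Proof.
move=> F0; split=> [phi0 | psi0].
  apply: functional_extensionality => t; apply: (mulfI c_neq0).
  by rewrite -[c * _](congr1 (@^~ t) F_phi) phi0 F0 mulr0.
by apply: F_inj; rewrite F_phi F0 psi0; apply: functional_extensionality => t; rewrite mulr0.
Qed.

Lemma proportional_image_comp_fixed (f : T -> T) :
  (forall chi, F (chi \o f) = F chi \o f) -> phi \o f = phi <-> psi \o f = psi.
Proof.
move=> F_comp; split=> [phi_f | psi_f].
  apply: functional_extensionality => t; apply: (mulfI c_neq0).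
  by rewrite /= -!(congr1 (@^~ _) F_phi) -[F phi (f t)]/((F phi \o f) t) -F_comp phi_f.
apply: F_inj; rewrite F_comp F_phi -{2}psi_f.
by apply: functional_extensionality.
Qed.

End ProportionalImage.

Section Walk.
Variables (V : finType) (e : rel V).
Hypothesis e_sym : symmetric e.
Local Notation arcs := (Defs.arc e).
Local Notation dstar_e := (@dstar_e V e).

Definition inv_sqrt_deg (v : V) : algC := (sqrtC (deg e v)%:R)^-1.

Lemma conj_inv_sqrt_deg v : (inv_sqrt_deg v)^* = inv_sqrt_deg v.
Proof. by rewrite conj_Creal // ger0_real // invr_ge0 sqrtC_ge0 ler0n. Qed.

Lemma inv_sqrt_degK v : inv_sqrt_deg v * inv_sqrt_deg v = (deg e v)%:R^-1.
Proof. by rewrite -invfM -expr2 sqrtCK. Qed.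

Lemma dstar_eE v (a : arcs) : dstar_e v a = (v == arc_t a)%:R * inv_sqrt_deg v.
Proof.
rewrite /dstar_e (bigD1 v) //= eqxx mulr1 big1 ?addr0 => [|z /negbTE ->]; last first.
  by rewrite mulr0.
by rewrite /bdry_adj /bdry rmorphM /= conj_inv_sqrt_deg rmorph_nat mulrC.
Qed.

Lemma dsdE (a b : arcs) :
  dsd a b = (arc_t a == arc_t b)%:R * (deg e (arc_t a))%:R^-1.
Proof.
rewrite /dsd (bigD1 (arc_t a)) //= big1 ?addr0 => [|z /negbTE z_neq]; last first.
  by rewrite /bdry_adj /bdry z_neq mulr0 rmorph0 mul0r.
by rewrite /bdry_adj /bdry eqxx mulr1 conj_inv_sqrt_deg mulrA inv_sqrt_degK mulrC.
Qed.

Lemma card_arcs_to v : #|[set b : arcs | arc_t b == v]| = deg e v.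
Proof.
rewrite -(@card_in_imset _ _ (fun b : arcs => (val b).1)) => [|a b].
  rewrite /deg; apply: eq_card => u; rewrite [in RHS]inE.
  apply/imsetP/idP => [[b] | uv].
    by rewrite inE /arc_t => /eqP <- ->; rewrite e_sym (valP b).
  have vu : e (u, v).1 (u, v).2 by rewrite /= e_sym.
  by exists (exist _ (u, v) vu); rewrite ?inE.
rewrite !inE /arc_t => /eqP a2 /eqP b2 eq1; apply: val_inj.
by case: (val a) (val b) a2 b2 eq1 => [? ?] [? ?] /= -> -> ->.
Qed.

Lemma deg_arc_t_neq0 (a : arcs) : (deg e (arc_t a))%:R != 0 :> algC.
Proof.
rewrite pnatr_eq0 -card_arcs_to -lt0n card_gt0; apply/set0Pn.
by exists a; rewrite inE.
Qed.

Definition arc_rev (a : arcs) : arcs :=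
  exist _ ((val a).2, (val a).1) (etrans (e_sym _ _) (valP a)).

Lemma arc_revK : involutive arc_rev.
Proof. by case=> [[u v] uv]; apply: val_inj. Qed.

Definition coin (psi : arcs -> algC) (a : arcs) : algC :=
  \sum_b (2 * dsd a b - (a == b)%:R) * psi b.

Lemma applyUE psi a : applyU psi a = coin psi (arc_rev a).
Proof.
apply: eq_bigr => b _; rewrite /Umat (bigD1 (arc_rev a)) //= big1 ?addr0.
  by rewrite /Rmat /= -surjective_pairing eqxx mul1r.
move=> c c_neq; rewrite /Rmat; case: eqP => [ac|]; last by rewrite mul0r.
by case/eqP: c_neq; apply: val_inj; rewrite /= ac -surjective_pairing.
Qed.

Lemma coinE psi a : coin psi a =
  2 * (deg e (arc_t a))%:R^-1 * \sum_(b | arc_t b == arc_t a) psi b - psi a.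
Proof.
rewrite /coin; under eq_bigr => b _ do rewrite mulrBl.
rewrite sumrB [X in _ - X](bigD1 a) //= [X in _ - (_ + X)]big1; last first.
  by move=> b /negbTE; rewrite eq_sym => ->; rewrite mul0r.
rewrite eqxx mul1r addr0 [in RHS]big_mkcond mulr_sumr; congr (_ - _).
apply: eq_bigr => b _; rewrite dsdE eq_sym.
by case: eqP => _; rewrite ?mul1r // !(mul0r, mulr0).
Qed.

Lemma coinK : involutive coin.
Proof.
move=> psi; apply: functional_extensionality => a.
rewrite !coinE; set d := (deg e (arc_t a))%:R : algC.
set S := \sum_(b | arc_t b == arc_t a) psi b.
under eq_bigr => b /eqP ba do rewrite coinE ba -/d -/S.
rewrite sumrB -/S.
have -> : \sum_(b : arcs | arc_t b == arc_t a) 2 / d * S = 2 / d * S * d.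
  rewrite (eq_bigl (mem [set b : arcs | arc_t b == arc_t a])) => [|b]; last first.
    by rewrite /= inE.
  by rewrite sumr_const card_arcs_to mulr_natr.
by field; apply: deg_arc_t_neq0.
Qed.

Lemma applyU_inj : injective (@applyU V e).
Proof.
move=> phi psi U_eq; rewrite -[phi]coinK -[psi]coinK; congr coin.
apply: functional_extensionality => a.
by rewrite -[a]arc_revK -!applyUE U_eq.
Qed.

Lemma applyU0 : applyU (fun _ : arcs => 0) = (fun _ => 0).
Proof.
by apply: functional_extensionality => a; apply: big1 => b _; rewrite mulr0.
Qed.

Lemma dstar_e_supp u a : dstar_e u a != 0 -> u = arc_t a.
Proof. by rewrite dstar_eE; case: (u =P arc_t a) => // _; rewrite mul0r eqxx. Qed.

Lemma dstar_e_inj u v :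
  dstar_e u <> (fun _ => 0) -> dstar_e u = dstar_e v -> u = v.
Proof.
move=> u_neq0 uv; have [a ua] : exists a, dstar_e u a != 0.
  apply/existsP; apply: contra_notT u_neq0 => /existsPn u0.
  by apply: functional_extensionality => a; apply/eqP/negPn/u0.
by rewrite (dstar_e_supp ua) (@dstar_e_supp v a) // -uv.
Qed.

Lemma is_autP (g : {perm V}) :
  reflect (forall u v, e (g u) (g v) = e u v) (is_aut e g).
Proof.
apply: (iffP forallP) => [g_aut u v | g_aut u]; first exact/eqP/(forallP (g_aut u)).
by apply/forallP => v; rewrite g_aut.
Qed.

Section Automorphism.
Variable g : {perm V}.
Hypothesis g_aut : forall u v, e (g u) (g v) = e u v.

Definition aut_arc (a : arcs) : arcs :=
  exist _ (g (val a).1, g (val a).2) (etrans (g_aut _ _) (valP a)).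

Lemma aut_arc_inj : injective aut_arc.
Proof.
move=> [[u1 v1] ?] [[u2 v2] ?] /(congr1 val) [/perm_inj eq_u /perm_inj eq_v].
by apply: val_inj; rewrite /= eq_u eq_v.
Qed.

Lemma deg_aut v : deg e (g v) = deg e v.
Proof.
rewrite /deg -[RHS](card_imset _ (@perm_inj _ g)); apply: eq_card => w.
by rewrite inE -{1}(permKV g w) g_aut -{2}(permKV g w) mem_imset ?inE //; apply: perm_inj.
Qed.

Lemma Umat_aut a b : Umat (aut_arc a) (aut_arc b) = Umat a b.
Proof.
rewrite /Umat (reindex_inj aut_arc_inj); apply: eq_bigr => c _.
rewrite /Rmat !dsdE /= (inj_eq aut_arc_inj) /arc_t /= (inj_eq perm_inj) deg_aut.
by rewrite !xpair_eqE !(inj_eq perm_inj).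
Qed.

Lemma applyU_aut psi : applyU (psi \o aut_arc) = applyU psi \o aut_arc.
Proof.
apply: functional_extensionality => a.
rewrite /applyU /= [RHS](reindex_inj aut_arc_inj).
by apply: eq_bigr => b _; rewrite Umat_aut.
Qed.

Lemma iter_applyU_aut n psi :
  iter n (@applyU V e) (psi \o aut_arc) = iter n (@applyU V e) psi \o aut_arc.
Proof. by elim: n => //= n ->; rewrite applyU_aut. Qed.

Lemma dstar_e_aut u : dstar_e u \o aut_arc = dstar_e ((g^-1)%g u).
Proof.
apply: functional_extensionality => a.
rewrite /= !dstar_eE /arc_t /= -[in LHS](permKV g u) (inj_eq perm_inj).
by rewrite /inv_sqrt_deg deg_aut.
Qed.

Lemma dstar_e_fixed_aut u :
  dstar_e u <> (fun _ => 0) -> dstar_e u \o aut_arc = dstar_e u <-> g u = u.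
Proof.
move=> u_neq0; rewrite dstar_e_aut; split=> [/esym/(dstar_e_inj u_neq0) ginv_u | gu].
  by rewrite {1}ginv_u permKV.
by rewrite -{1}gu permK.
Qed.

End Automorphism.
End Walk.

Theorem corollary3p4 (V : finType) (e : rel V)
  (e_sym : symmetric e) (e_irr : irreflexive e) (x y : V) :
  PST (@dstar_e V e x) (@dstar_e V e y) -> Aut_stab e x = Aut_stab e y.
Proof.
case=> [[a0 xy_a0] [tau [gamma [_ [gamma_norm U_tau]]]]].
have gamma_neq0 : gamma != 0 by rewrite -normr_eq0 gamma_norm oner_eq0.
pose F := iter tau (@applyU V e).
have F_inj : injective F := inj_iter (applyU_inj e_sym).
have F_x : F (dstar_e x) = (fun a => gamma * dstar_e y a).
  exact: functional_extensionality.
have [x_neq0 y_neq0] :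
    @dstar_e V e x <> (fun _ => 0) /\ @dstar_e V e y <> (fun _ => 0).
  have [x0_y0 y0_x0] :=
    proportional_image_eq0 F_inj gamma_neq0 F_x (iter_fix tau (applyU0 e)).
  split=> [x0 | y0]; move: xy_a0; last by rewrite (y0_x0 y0) y0 eqxx.
  by rewrite (x0_y0 x0) x0 eqxx.
apply/setP => g; rewrite !inE; case: (is_autP e g) => //= g_aut.
have := proportional_image_comp_fixed F_inj gamma_neq0 F_x (iter_applyU_aut g_aut tau).
rewrite (dstar_e_fixed_aut g_aut x_neq0) (dstar_e_fixed_aut g_aut y_neq0) => -[xy yx].
by apply/eqP/eqP.
Qed.
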